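(* Let $\mathcal{H}$ be a separable Hilbert space and $H$ a positive Hermitian operator on $\mathcal{H}$ with purely discrete spectrum, such that there is no infinite-dimensional subspace on which $H$ is bounded, and let $E>0$. Given any $\epsilon>0$ there is $\delta>0$ such that for any positive operators $A,A'$ with $\mathrm{Tr}\,AH\le E$ and $\mathrm{Tr}\,A'H\le E$, if $\|A-A'\|_2<\delta$ then $|\mathrm{Tr}(A-A')|<\epsilon$.
   Context: $\|\cdot\|_2$ is the Hilbert–Schmidt norm $\|A\|_2=\sqrt{\mathrm{Tr}\,A^\dagger A}$. For positive $A$, $\mathrm{Tr}\,AH=\sum_n\langle n|A|n\rangle E_n\in[0,\infty]$ in an eigenbasis $\{|n\rangle\}$ of $H$ with eigenvalues $E_n$. *)

From HB Require Import structures.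
From mathcomp Require Import all_boot all_order all_algebra.
From mathcomp Require Import all_classical all_reals all_analysis.
From mathcomp Require Import complex.
Set Implicit Arguments. Unset Strict Implicit. Unset Printing Implicit Defensive.
Import Order.TTheory GRing.Theory Num.Theory.
Local Open Scope ring_scope.

(* Model: the separable Hilbert space is l^2(nat) over C = R[i], with the
   orthonormal basis {|n>} an eigenbasis of H, H |n> = Ev n |n>.
   Vectors are sequences nat -> R[i]; operators A are given by their
   matrix entries A m n = <m|A|n>. *)

Section Defs.
Variable R : realType.
Local Notation C := (R[i]).

Definition sqnorm (z : C) : R := (complex.Re z) ^+ 2 + (complex.Im z) ^+ 2.

(* sum_n |x n|^2 in the extended reals (x is in l^2 iff this is finite) *)
Definition l2sq (x : nat -> C) : \bar R := (\sum_(n <oo) (sqnorm (x n))%:E)%E.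

(* ||H x||^2 = sum_n E_n^2 |x n|^2 *)
Definition Hsq (Ev : nat -> R) (x : nat -> C) : \bar R :=
  (\sum_(n <oo) ((Ev n) ^+ 2 * sqnorm (x n))%:E)%E.

Definition domH (Ev : nat -> R) (x : nat -> C) : Prop :=
  (l2sq x < +oo)%E /\ (Hsq Ev x < +oo)%E.

Definition subspace_domH (Ev : nat -> R) (V : set (nat -> C)) : Prop :=
  [/\ V (fun _ => 0),
      (forall x y, V x -> V y -> V (fun n => x n + y n)),
      (forall (c : C) x, V x -> V (fun n => c * x n)) &
      (forall x, V x -> domH Ev x)].

Definition H_bounded_on (Ev : nat -> R) (V : set (nat -> C)) : Prop :=
  exists M : R, forall x, V x -> (Hsq Ev x <= (M ^+ 2)%:E * l2sq x)%E.

Definition inf_dim (V : set (nat -> C)) : Prop :=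
  forall k : nat, exists f : 'I_k -> (nat -> C),
    (forall i, V (f i)) /\
    (forall c : 'I_k -> C, (forall n, \sum_(i < k) c i * f i n = 0) ->
       forall i, c i = 0).

Definition no_inf_dim_bounded_subspace (Ev : nat -> R) : Prop :=
  forall V : set (nat -> C), subspace_domH Ev V -> H_bounded_on Ev V -> ~ inf_dim V.

Definition supp_below (N : nat) (x : nat -> C) : Prop := forall n, (N <= n)%N -> x n = 0.

Definition form (A : nat -> nat -> C) (N : nat) (y x : nat -> C) : C :=
  \sum_(m < N) \sum_(n < N) conjc (y m) * A m n * x n.

(* A is (the matrix of) a bounded positive operator on l^2(nat):
   <x|Ax> >= 0 (in particular real) on the dense subspace of finitely
   supported vectors, and A is bounded there. *)
Definition pos_op (A : nat -> nat -> C) : Prop :=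
  (forall N x, supp_below N x -> 0 <= form A N x x) /\
  (exists M : R, forall N x y, supp_below N x -> supp_below N y ->
     sqnorm (form A N y x) <=
       M ^+ 2 * (\sum_(n < N) sqnorm (x n)) * (\sum_(n < N) sqnorm (y n))).

(* Tr A = sum_n <n|A|n> (A positive, so diagonal entries are real >= 0) *)
Definition trace (A : nat -> nat -> C) : \bar R :=
  (\sum_(n <oo) (complex.Re (A n n))%:E)%E.

Definition trAH (Ev : nat -> R) (A : nat -> nat -> C) : \bar R :=
  (\sum_(n <oo) (complex.Re (A n n) * Ev n)%:E)%E.

(* ||A||_2^2 = Tr A^dagger A = sum_{m,n} |<m|A|n>|^2 *)
Definition hs_norm2 (A : nat -> nat -> C) : \bar R :=
  (\sum_(m <oo) \sum_(n <oo) (sqnorm (A m n))%:E)%E.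

End Defs.

From Pilot Require Import Defs.
From HB Require Import structures.
From mathcomp Require Import all_boot all_order all_algebra.
From mathcomp Require Import all_classical all_reals all_analysis.
From mathcomp Require Import complex.
From mathcomp Require Import ring lra.
Set Implicit Arguments. Unset Strict Implicit. Unset Printing Implicit Defensive.
Import Order.TTheory GRing.Theory Num.Theory.
Local Open Scope ring_scope.

(* Only the diagonal entries of A and A' matter.  Since H has no
   infinite-dimensional bounded subspace, its eigenvalues E_n eventually
   exceed any level M, say for n >= N.  Then Tr AH <= E forces the tail
   sum_(n >= N) <n|A|n> below E/M, uniformly in A, while each of the N
   leading diagonal entries of A - A' is bounded by ||A - A'||_2.  Taking
   M = 4E/eps and delta = eps/(4(N+1)) gives |Tr A - Tr A'| < eps/2. *)

Section NonnegSeries.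
Variable R : realType.
Implicit Types (u a b w : nat -> R) (x E M d : R).

Lemma nneseries_le_of_partial u x : (forall n, 0 <= u n) ->
  (forall K, \sum_(0 <= k < K) u k <= x) ->
  (\sum_(k <oo) (u k)%:E <= x%:E)%E.
Proof.
move=> u0 ux; apply: lime_le.
  by apply: is_cvg_nneseries => n _ _; rewrite lee_fin.
by apply: nearW => K; rewrite sumEFin lee_fin.
Qed.

Lemma partial_le_nneseries u K : (forall n, 0 <= u n) ->
  ((\sum_(0 <= k < K) u k)%:E <= \sum_(k <oo) (u k)%:E)%E.
Proof.
by move=> u0; rewrite -sumEFin; apply: nneseries_lim_ge => n _ _; rewrite lee_fin.
Qed.

Lemma nneseries_lty_of_supp u K : (forall n, 0 <= u n) ->
  (forall n, (K <= n)%N -> u n = 0) -> (\sum_(n <oo) (u n)%:E < +oo)%E.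
Proof.
move=> u0 uK; rewrite (@nneseries_split _ _ 0 K); last by move=> k _; rewrite lee_fin.
by rewrite add0n eseries0 ?adde0 ?sumEFin ?ltry // => i Ki _; rewrite uK.
Qed.

Lemma term_le_nneseries (u : nat -> \bar R) n : (forall k, (0 <= u k)%E) ->
  (u n <= \sum_(k <oo) u k)%E.
Proof.
move=> u0; rewrite (@nneseriesD1 _ _ n xpredT) //.
by rewrite leeDl //; exact: nneseries_ge0.
Qed.

Lemma nneseries_weighted_tail a w N M E :
  (forall n, 0 <= a n) -> (forall n, 0 <= w n) -> 0 < M ->
  (forall n, (N <= n)%N -> M <= w n) ->
  (\sum_(n <oo) (a n * w n)%:E <= E%:E)%E ->
  exists2 s, (\sum_(n <oo) (a n)%:E)%E = s%:E &
    \sum_(0 <= n < N) a n <= s <= \sum_(0 <= n < N) a n + E / M.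
Proof.
move=> a0 w0 M0 wM aw_le.
have aw0 n : 0 <= a n * w n by rewrite mulr_ge0.
have aw_partial K : \sum_(0 <= k < K) a k * w k <= E.
  by rewrite -lee_fin (le_trans _ aw_le) // partial_le_nneseries.
have E0 : 0 <= E by move: (aw_partial 0%N); rewrite big_geq.
have EM0 : 0 <= E / M by rewrite divr_ge0 // ltW.
have tail_le K : (N <= K)%N -> \sum_(N <= k < K) a k <= E / M.
  move=> NK; rewrite ler_pdivlMr // mulr_suml (le_trans _ (aw_partial K)) //.
  rewrite (big_cat_nat (leq0n N) NK) /=; apply: ler_wpDl; first exact: sumr_ge0.
  by apply: ler_sum_nat => k /andP[Nk _]; rewrite ler_wpM2l ?wM.
have ub : (\sum_(n <oo) (a n)%:E <= (\sum_(0 <= n < N) a n + E / M)%:E)%E.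
  apply: nneseries_le_of_partial => // K; case: (leqP K N) => [KN | /ltnW NK].
    rewrite (big_cat_nat (leq0n K) KN) //= -addrA lerDl addr_ge0 ?sumr_ge0 //.
  by rewrite (big_cat_nat (leq0n N) NK) //= lerD2l tail_le.
have lb := partial_le_nneseries N a0.
have fin : (\sum_(n <oo) (a n)%:E)%E \is a fin_num.
  by rewrite fin_numE gt_eqF ?(lt_le_trans _ lb) ?ltNyr // lt_eqF ?(le_lt_trans ub) ?ltry.
by exists (fine (\sum_(n <oo) (a n)%:E)%E); rewrite ?fineK // -!lee_fin fineK ?lb.
Qed.

Lemma nneseries_dist_le a b w N M E d :
  (forall n, 0 <= a n) -> (forall n, 0 <= b n) -> (forall n, 0 <= w n) ->
  0 < M -> (forall n, (N <= n)%N -> M <= w n) ->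
  (\sum_(n <oo) (a n * w n)%:E <= E%:E)%E ->
  (\sum_(n <oo) (b n * w n)%:E <= E%:E)%E ->
  (forall n, `|a n - b n| <= d) ->
  (`|\sum_(n <oo) (a n)%:E - \sum_(n <oo) (b n)%:E| <= (N%:R * d + E / M)%:E)%E.
Proof.
move=> a0 b0 w0 M0 wM awE bwE ab_d.
have [sa -> /andP[la ua]] := nneseries_weighted_tail a0 w0 M0 wM awE.
have [sb -> /andP[lb ub]] := nneseries_weighted_tail b0 w0 M0 wM bwE.
have head : `|\sum_(0 <= n < N) a n - \sum_(0 <= n < N) b n| <= N%:R * d.
  rewrite -sumrB (le_trans (ler_norm_sum _ _ _)) //.
  apply: (@le_trans _ _ (\sum_(0 <= n < N) d)); first exact: ler_sum_nat.
  by rewrite sumr_const_nat subn0 mulr_natl.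
rewrite -EFinB lee_fin; move: head; rewrite !ler_norml => /andP[h1 h2].
apply/andP; split; lra.
Qed.

End NonnegSeries.

Section Sqnorm.
Variable R : realType.
Implicit Type z : R[i].

Lemma sqnorm_ge0 z : 0 <= sqnorm z.
Proof. by rewrite /sqnorm addr_ge0 // sqr_ge0. Qed.

Lemma sqnorm0 : sqnorm (0 : R[i]) = 0.
Proof. by rewrite /sqnorm /= expr0n /= addr0. Qed.

Lemma sqr_Re_le_sqnorm z : complex.Re z ^+ 2 <= sqnorm z.
Proof. by rewrite lerDl sqr_ge0. Qed.

End Sqnorm.

Definition unit_vec {R : realType} (i : nat) : nat -> R[i] :=
  fun n => if n == i then 1 else 0.

Lemma unit_vec_supp {R : realType} n : supp_below n.+1 (@unit_vec R n).
Proof. by move=> m; rewrite /unit_vec; case: (eqVneq m n) => [->|//]; rewrite ltnn. Qed.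

Section LowEnergySubspace.
Variables (R : realType) (Ev : nat -> R).
Hypothesis Ev_ge0 : forall n, 0 <= Ev n.
Local Notation C := R[i].

Definition low_energy (M : R) (x : nat -> C) : Prop :=
  (exists K, supp_below K x) /\ (forall n, M <= Ev n -> x n = 0).

Lemma l2sq_lty_supp K (x : nat -> C) : supp_below K x -> (l2sq x < +oo)%E.
Proof.
move=> xK; apply: (@nneseries_lty_of_supp _ _ K) => [n|n Kn]; first exact: sqnorm_ge0.
by rewrite xK // sqnorm0.
Qed.

Lemma low_energy_Hsq_le M x : low_energy M x -> (Hsq Ev x <= (M ^+ 2)%:E * l2sq x)%E.
Proof.
move=> [_ xM]; rewrite /Hsq /l2sq -nneseriesZl; last by move=> n _; rewrite lee_fin sqnorm_ge0.
apply: lee_nneseries => [n _ _|n _]; first by rewrite lee_fin mulr_ge0 ?sqr_ge0 ?sqnorm_ge0.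
rewrite -EFinM lee_fin; case: (ltP (Ev n) M) => [EvM|/xM->]; last by rewrite sqnorm0 !mulr0.
apply: ler_wpM2r; first exact: sqnorm_ge0.
by have := Ev_ge0 n; nra.
Qed.

Lemma low_energy_subspace M : subspace_domH Ev (low_energy M).
Proof.
split.
- by split; first exists 0%N.
- move=> x y [[Kx xK] xM] [[Ky yK] yM]; split.
    by exists (maxn Kx Ky) => n; rewrite geq_max => /andP[nx ny]; rewrite xK // yK // addr0.
  by move=> n nM; rewrite xM // yM // addr0.
- move=> c x [[K xK] xM]; split; first by exists K => n nK; rewrite xK // mulr0.
  by move=> n nM; rewrite xM // mulr0.
- move=> x Vx; have [[K xK] _] := Vx; have l2x := l2sq_lty_supp xK.
  split=> //; apply: le_lt_trans (low_energy_Hsq_le Vx) _.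
  have : (0 <= l2sq x)%E by apply: nneseries_ge0 => n _ _; rewrite lee_fin sqnorm_ge0.
  by move: l2x; case: (l2sq x) => // r _ _; rewrite -EFinM ltry.
Qed.

Lemma low_energy_bounded M : H_bounded_on Ev (low_energy M).
Proof. by exists M; exact: low_energy_Hsq_le. Qed.

Lemma inf_dim_unit_vecs (V : set (nat -> C)) (g : nat -> nat) :
  injective g -> (forall k, V (unit_vec (g k))) -> inf_dim V.
Proof.
move=> g_inj Vg k; exists (fun i : 'I_k => unit_vec (g i)); split=> // c c_free i.
have := c_free (g i); rewrite (bigD1 i) //= /unit_vec eqxx mulr1 big1 ?addr0 //.
move=> j ji; case: eqP => [/g_inj/val_inj ij|_]; last by rewrite mulr0.
by rewrite ij eqxx in ji.
Qed.

Lemma not_eventually_subseq (P : nat -> Prop) :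
  ~ (exists N, forall n, (N <= n)%N -> P n) ->
  exists2 g : nat -> nat, injective g & forall k, ~ P (g k).
Proof.
move=> not_ev.
have next m : {n | (m < n)%N /\ ~ P n}.
  apply: cid; apply: contrapT => no_next; apply: not_ev; exists m.+1 => n mn.
  by apply: contrapT => Pn; apply: no_next; exists n.
have [f [_ f_next]] := dependent_choice next 0%N.
exists (f \o S) => [|k]; last exact: (f_next k).2.
apply: (@increasing_seq_injective _ nat) => /=.
by apply/increasing_seqP => k; rewrite ltEnat; exact: (f_next k.+1).1.
Qed.

Lemma eigenvalues_eventually_ge M : no_inf_dim_bounded_subspace Ev ->
  exists N, forall n, (N <= n)%N -> M <= Ev n.
Proof.
move=> no_bounded; apply: contrapT => /not_eventually_subseq[g g_inj g_low].
apply: (no_bounded _ (low_energy_subspace M) (low_energy_bounded M)).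
apply: (inf_dim_unit_vecs g_inj) => k; split.
  by exists (g k).+1; exact: unit_vec_supp.
by move=> n; rewrite /unit_vec; case: eqP => // -> /g_low.
Qed.

End LowEnergySubspace.

Section DiagonalEntries.
Variable R : realType.
Implicit Types A B : nat -> nat -> R[i].

Lemma form_unit_vec A n : Defs.form A n.+1 (unit_vec n) (unit_vec n) = A n n.
Proof.
have off (m : 'I_n.+1) : m != ord_max -> unit_vec n m = 0 :> R[i].
  by move=> mn; rewrite /unit_vec; case: eqP => // m_n; case/eqP: mn; apply: val_inj.
rewrite /Defs.form (bigD1 ord_max) //= [X in _ + X]big1 => [|m /off->]; last first.
  by apply: big1 => k _; rewrite conjc0 !mul0r.
rewrite addr0 (bigD1 ord_max) //= big1 => [|k /off->]; last by rewrite mulr0.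
by rewrite /unit_vec eqxx conjc1 mul1r mulr1 addr0.
Qed.

Lemma pos_op_diag_ge0 A n : pos_op A -> 0 <= complex.Re (A n n).
Proof.
case=> A_pos _.
by have := A_pos _ _ (@unit_vec_supp R n); rewrite form_unit_vec lecE => /andP[].
Qed.

Lemma sqnorm_le_hs_norm2 B m n : ((sqnorm (B m n))%:E <= hs_norm2 B)%E.
Proof.
have sq0 k l : (0 <= (sqnorm (B k l))%:E)%E by rewrite lee_fin sqnorm_ge0.
apply: le_trans (term_le_nneseries _ _) => [|k]; last exact: nneseries_ge0.
exact: term_le_nneseries.
Qed.

Lemma diag_dist_le_hs_norm2 A (A' : nat -> nat -> R[i]) (d : R) n : 0 <= d ->
  (hs_norm2 (fun m n => (A m n - A' m n)%R) < (d ^+ 2)%:E)%E ->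
  `|complex.Re (A n n) - complex.Re (A' n n)| <= d.
Proof.
move=> d0 hs_lt.
have diag_sq : (complex.Re (A n n) - complex.Re (A' n n)) ^+ 2 < d ^+ 2.
  rewrite -lte_fin (le_lt_trans _ (le_lt_trans (sqnorm_le_hs_norm2 _ n n) hs_lt)) //.
  have -> : complex.Re (A n n) - complex.Re (A' n n) = complex.Re (A n n - A' n n).
    by case: (A n n) (A' n n) => [x y] [x' y'].
  by rewrite lee_fin sqr_Re_le_sqnorm.
by rewrite ler_norml; apply/andP; split; nra.
Qed.

End DiagonalEntries.

Theorem mainTheorem6 (R : realType) (Ev : nat -> R) (Emax : R) :
  (forall n, 0 <= Ev n) ->
  no_inf_dim_bounded_subspace Ev ->
  0 < Emax ->
  forall eps : R, 0 < eps ->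
  exists2 delta : R, 0 < delta &
    forall A A' : nat -> nat -> R[i],
      pos_op A -> pos_op A' ->
      (trAH Ev A <= Emax%:E)%E -> (trAH Ev A' <= Emax%:E)%E ->
      (hs_norm2 (fun m n => (A m n - A' m n)%R) < (delta ^+ 2)%:E)%E ->
      (`| trace A - trace A' | < eps%:E)%E.
Proof.
move=> Ev_ge0 no_bounded Emax0 eps eps0.
pose M := 4 * Emax / eps.
have M0 : 0 < M by rewrite divr_gt0 // mulr_gt0.
have [N Ev_ge] := eigenvalues_eventually_ge Ev_ge0 M no_bounded.
pose delta := eps / (4 * (N%:R + 1)).
have N1_gt0 : 0 < (N%:R + 1 : R) by rewrite ltr_wpDl.
have delta0 : 0 < delta by rewrite divr_gt0 // mulr_gt0.
have bound : N%:R * delta + Emax / M < eps.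
  have Ndelta : N%:R * delta = eps / 4 - delta by rewrite /delta; field; rewrite gt_eqF.
  have EmaxM : Emax / M = eps / 4 by rewrite /M; field; rewrite !gt_eqF.
  by rewrite Ndelta EmaxM; lra.
exists delta => // A A' posA posA' AH_le A'H_le hs_lt.
apply: le_lt_trans (nneseries_dist_le _ _ Ev_ge0 M0 Ev_ge AH_le A'H_le _) _.
- by move=> n; exact: pos_op_diag_ge0.
- by move=> n; exact: pos_op_diag_ge0.
- by move=> n; exact: (diag_dist_le_hs_norm2 _ (ltW delta0) hs_lt).
by rewrite lte_fin.
Qed.
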